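(* Let $f:\mathbb R^{d_x}\times\mathbb R^{d_y}\to\mathbb R$ be $L$-smooth, with $-f(x,\cdot)$ $\mu_y$-PL for every $x$, such that for every $x$ the problem $\max_yf(x,y)$ has a unique solution and finite optimal value, and $g(x)=\max_yf(x,y)$ is bounded below. Let $\beta>L$, $u\in\mathbb R^{d_x}$ and $F(x,y)=f(x,y)+\frac\beta2\|x-u\|^2$. Then $F$ has a unique saddle point, i.e. a unique $(\tilde x,\tilde y)$ with $F(\tilde x,y)\le F(\tilde x,\tilde y)\le F(x,\tilde y)$ for all $x,y$.
   Context: $L$-smooth means $\|\nabla f(x,y)-\nabla f(x',y')\|^2\le L^2(\|x-x'\|^2+\|y-y'\|^2)$. A differentiable $h$ is $\mu$-PL if $\|\nabla h(z)\|^2\ge2\mu(h(z)-\min h)$ for all $z$. *)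

From HB Require Import structures.
From mathcomp Require Import all_boot all_order all_algebra.
From mathcomp Require Import all_classical all_reals all_analysis.
Set Implicit Arguments. Unset Strict Implicit. Unset Printing Implicit Defensive.
Import Order.TTheory GRing.Theory Num.Theory.
Import numFieldNormedType.Exports.
Local Open Scope classical_set_scope.
Local Open Scope ring_scope.

Definition sqn {R : realType} {n : nat} (v : 'rV[R]_n) : R :=
  \sum_(i < n) (v ord0 i) ^+ 2.

Definition grad {R : realType} {n : nat} (h : 'rV[R]_n -> R) (z : 'rV[R]_n)
  : 'rV[R]_n := \row_i ('d h z (delta_mx ord0 i)).

Definition gradx {R : realType} {dx dy : nat} (f : 'rV[R]_dx * 'rV[R]_dy -> R)
  (x : 'rV[R]_dx) (y : 'rV[R]_dy) : 'rV[R]_dx :=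
  \row_i ('d f (x, y) (delta_mx ord0 i, 0)).
Definition grady {R : realType} {dx dy : nat} (f : 'rV[R]_dx * 'rV[R]_dy -> R)
  (x : 'rV[R]_dx) (y : 'rV[R]_dy) : 'rV[R]_dy :=
  \row_i ('d f (x, y) (0, delta_mx ord0 i)).

Definition L_smooth {R : realType} {dx dy : nat} (f : 'rV[R]_dx * 'rV[R]_dy -> R)
  (L : R) : Prop :=
  (forall z, differentiable f z) /\
  forall x y x' y',
    sqn (gradx f x y - gradx f x' y') + sqn (grady f x y - grady f x' y')
      <= L ^+ 2 * (sqn (x - x') + sqn (y - y')).

Definition PL {R : realType} {n : nat} (h : 'rV[R]_n -> R) (mu : R) : Prop :=
  (forall z, differentiable h z) /\
  forall z, 2 * mu * (h z - inf (range h)) <= sqn (grad h z).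

Definition maxval {R : realType} {dx dy : nat} (f : 'rV[R]_dx * 'rV[R]_dy -> R)
  (x : 'rV[R]_dx) : R := sup (range (fun y => f (x, y))).

Definition saddle_point {R : realType} {dx dy : nat}
  (F : 'rV[R]_dx * 'rV[R]_dy -> R) (p : 'rV[R]_dx * 'rV[R]_dy) : Prop :=
  forall x y, F (p.1, y) <= F p /\ F p <= F (x, p.2).

From HB Require Import structures.
From mathcomp Require Import all_boot all_order all_algebra.
From mathcomp Require Import all_classical all_reals all_analysis.
From mathcomp Require Import ring lra.
Set Implicit Arguments. Unset Strict Implicit. Unset Printing Implicit Defensive.
Import Order.TTheory GRing.Theory Num.Theory.
Import numFieldNormedType.Exports.
Local Open Scope classical_set_scope.
Local Open Scope ring_scope.

(* Let y*(x) be the maximiser of f(x, .) and P(x) = F(x, y*(x)) = max_y F(x, y).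
   As beta > L, every F(., y) is (beta - L)-strongly convex, hence so is P: it is
   coercive and has at most one minimiser.  The PL inequality and the Lipschitz
   gradient give f(x, y*(x)) <= f(x, y*(x0)) + L^2/(2 mu) |x - x0|^2, so P is
   continuous (hence has a minimiser x0) and, at x0, this quadratic upper model
   forces the x-gradient of F at (x0, y*(x0)) to vanish; strong convexity of
   F(., y*(x0)) then makes (x0, y*(x0)) a saddle point.  Conversely every saddle
   point (p1, p2) has p2 = y*(p1) and p1 minimising P. *)

Section Euclidean.
Variables (R : realType) (n : nat).
Implicit Types (a b v : 'rV[R]_n) (c : R).

Definition dot a b : R := \sum_(i < n) a ord0 i * b ord0 i.

Lemma dot0l b : dot 0 b = 0.
Proof. by rewrite /dot big1 // => i _; rewrite mxE mul0r. Qed.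

Lemma dot0r a : dot a 0 = 0.
Proof. by rewrite /dot big1 // => i _; rewrite mxE mulr0. Qed.

Lemma dotDl a b v : dot (a + b) v = dot a v + dot b v.
Proof. by rewrite /dot -big_split; apply: eq_bigr => i _; rewrite mxE mulrDl. Qed.

Lemma dotBl a b v : dot (a - b) v = dot a v - dot b v.
Proof. by rewrite /dot -sumrB; apply: eq_bigr => i _; rewrite !mxE mulrBl. Qed.

Lemma dotZl a b c : dot (c *: a) b = c * dot a b.
Proof. by rewrite /dot mulr_sumr; apply: eq_bigr => i _; rewrite mxE mulrA. Qed.

Lemma dotZr a b c : dot a (c *: b) = c * dot a b.
Proof. by rewrite /dot mulr_sumr; apply: eq_bigr => i _; rewrite mxE mulrCA. Qed.

Lemma dotNl a b : dot (- a) b = - dot a b.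
Proof. by rewrite -scaleN1r dotZl mulN1r. Qed.

Lemma dotvv a : dot a a = sqn a.
Proof. by apply: eq_bigr => i _; rewrite expr2. Qed.

Lemma sqn_ge0 v : 0 <= sqn v.
Proof. by apply: sumr_ge0 => i _; apply: sqr_ge0. Qed.

Lemma sqn0 : sqn (0 : 'rV[R]_n) = 0.
Proof. by rewrite /sqn big1 // => i _; rewrite mxE expr0n. Qed.

Lemma sqnZ v c : sqn (c *: v) = c ^+ 2 * sqn v.
Proof. by rewrite /sqn mulr_sumr; apply: eq_bigr => i _; rewrite mxE exprMn. Qed.

Lemma sqnN v : sqn (- v) = sqn v.
Proof. by rewrite -scaleN1r sqnZ sqrrN expr1n mul1r. Qed.

Lemma sqnDZ a b c : sqn (a + c *: b) = sqn a + 2 * c * dot a b + c ^+ 2 * sqn b.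
Proof.
rewrite /sqn /dot !mulr_sumr -!big_split; apply: eq_bigr => i _ /=.
by rewrite !mxE; ring.
Qed.

Lemma sqr_coord_le_sqn v i : v ord0 i ^+ 2 <= sqn v.
Proof. by rewrite /sqn (bigD1 i) //= lerDl; apply: sumr_ge0 => j _; apply: sqr_ge0. Qed.

Lemma sqn_le0 v : sqn v <= 0 -> v = 0.
Proof.
move=> v0; apply/rowP => i; rewrite mxE; apply/eqP.
by rewrite -sqrf_eq0 eq_le sqr_ge0 (le_trans (sqr_coord_le_sqn v i)).
Qed.

Lemma dot_le_sqn a b c : 2 * c * dot a b <= sqn a + c ^+ 2 * sqn b.
Proof. by have := sqn_ge0 (a + (- c) *: b); rewrite sqnDZ sqrrN; lra. Qed.

Lemma continuous_sqnB a : continuous (fun x : 'rV[R]_n => sqn (x - a)).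
Proof.
move=> x; rewrite /sqn.
have -> : (fun y : 'rV[R]_n => \sum_(i < n) (y - a) ord0 i ^+ 2) =
          \sum_(i < n) (fun y : 'rV[R]_n => (y - a) ord0 i ^+ 2).
  by apply/funext => y; rewrite fct_sumE.
apply: (big_ind (fun h : 'rV[R]_n -> R => {for x, continuous h})).
- exact: cst_continuous.
- by move=> g h; apply: continuousD.
move=> i _.
have -> : (fun y : 'rV[R]_n => (y - a) ord0 i ^+ 2) =
    (fun y => y ord0 i - a ord0 i) \* (fun y => y ord0 i - a ord0 i).
  by apply/funext => y; rewrite !mxE expr2.
by apply: continuousM; apply: continuousB;
  [exact: coord_continuous | exact: cst_continuous |
   exact: coord_continuous | exact: cst_continuous].
Qed.

End Euclidean.

Lemma dot_pair_le (R : realType) n m (a1 b1 : 'rV[R]_n) (a2 b2 : 'rV[R]_m) (c : R) :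
  0 < c -> sqn a1 + sqn a2 <= c ^+ 2 * (sqn b1 + sqn b2) ->
  `|dot a1 b1 + dot a2 b2| <= c * (sqn b1 + sqn b2).
Proof.
move=> c0 a_le; rewrite ler_norml.
suff : c * - (c * (sqn b1 + sqn b2)) <= c * (dot a1 b1 + dot a2 b2)
         <= c * (c * (sqn b1 + sqn b2)) by rewrite !ler_pM2l.
move: a_le (dot_le_sqn a1 b1 c) (dot_le_sqn a2 b2 c).
move: (dot_le_sqn a1 b1 (- c)) (dot_le_sqn a2 b2 (- c)); rewrite !sqrrN.
move: (dot a1 b1) (dot a2 b2) (sqn a1) (sqn a2) (sqn b1) (sqn b2) => d1 d2 sa1 sa2 sb1 sb2.
lra.
Qed.

Section QuadraticModels.
Variables (R : realType) (n : nat) (phi : 'rV[R]_n -> R).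

Definition is_min (x0 : 'rV[R]_n) : Prop := forall x, phi x0 <= phi x.

Definition strongly_convex_with (G : 'rV[R]_n -> 'rV[R]_n) (m : R) : Prop :=
  forall x v, phi x + dot (G x) v + m / 2 * sqn v <= phi (x + v).

Lemma min_stationary (x0 G : 'rV[R]_n) (K : R) : 0 < K -> is_min x0 ->
  (forall v, phi (x0 + v) <= phi x0 + dot G v + K * sqn v) -> G = 0.
Proof.
move=> K0 x0_min upper; apply: sqn_le0.
pose t := (2 * K)^-1.
have t0 : 0 < t by rewrite invr_gt0 mulr_gt0.
have Kt2 : K * t ^+ 2 = t / 2 by rewrite /t; field; rewrite lt0r_neq0.
have lower := x0_min (x0 + (- t) *: G).
have := upper ((- t) *: G); rewrite dotZr sqnZ sqrrN dotvv mulrA Kt2 => upper_t.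
have : t * sqn G <= 0 by lra.
by rewrite pmulr_rle0.
Qed.

Lemma strongly_convex_min_unique G m : 0 < m -> strongly_convex_with G m ->
  forall a b, is_min a -> is_min b -> a = b.
Proof.
move=> m0 sc a b a_min b_min.
pose v := 2^-1 *: (b - a); pose c := a + v.
have half_half : (2^-1 + 2^-1 : R) = 1 by field.
have cvb : c + v = b by rewrite -addrA -scalerDl half_half scale1r addrC subrK.
have cva : c + (-1) *: v = a by rewrite scaleN1r addrK.
have := sc c v; have := sc c ((-1) *: v).
rewrite cvb cva dotZr sqnZ sqrrN expr1n mul1r => to_a to_b.
have : m * sqn v <= 0 by have := a_min c; have := b_min c; lra.
rewrite pmulr_rle0 // => /sqn_le0 /eqP.
by rewrite scaler_eq0 invr_eq0 pnatr_eq0 subr_eq0 => /eqP.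
Qed.

Lemma strongly_convex_exists_min (G : 'rV[R]_n -> 'rV[R]_n) m : 0 < m ->
  continuous phi -> strongly_convex_with G m -> exists x0, is_min x0.
Proof.
move=> m0 phi_cont sc; pose u : 'rV[R]_n := 0.
pose q := sqn (G u).
(* beyond [|x - u|^2 = r], the minorant [phi u + <G u, x - u> + m/2 |x - u|^2] exceeds [phi u] *)
pose r := 1 + 4 * q / m ^+ 2.
have r1 : 1 <= r by rewrite lerDl divr_ge0 ?sqr_ge0 // mulr_ge0 ?sqn_ge0.
pose box := [set x : 'rV[R]_n | forall i, `[u ord0 i - r, u ord0 i + r]%classic (x ord0 i)].
have box_compact : compact box := @rV_compact R n _
  (fun i => @segment_compact R (u ord0 i - r) (u ord0 i + r)).
have box_u : box u by move=> i /=; rewrite in_itv /=; apply/andP; split; lra.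
have [x0 x0_box x0_min] := EVT_min_rV (ex_intro _ u box_u) box_compact
  (continuous_subspaceT phi_cont).
have outside x : ~ box x -> phi u < phi x.
  move=> /existsNP [i]; rewrite /= in_itv /= => /negP; rewrite negb_and -!ltNge => out_i.
  have r_lt : r ^+ 2 < (x - u) ord0 i ^+ 2.
    rewrite mxE mxE; move: (x ord0 i) (u ord0 i) out_i => xi ui.
    case/orP=> h.
    + have : 0 < (ui - xi - r) * (ui - xi + r) by apply: mulr_gt0; lra.
      nra.
    + have : 0 < (xi - ui - r) * (xi - ui + r) by apply: mulr_gt0; lra.
      nra.
  set s := sqn (x - u).
  have coord_s : (x - u) ord0 i ^+ 2 <= s by exact: sqr_coord_le_sqn.
  have rs : m ^+ 2 * r < m ^+ 2 * s by rewrite ltr_pM2l ?exprn_gt0 //; nra.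
  have mr : m ^+ 2 * r = m ^+ 2 + 4 * q by rewrite /r; field; rewrite lt0r_neq0.
  have := sc u (x - u); rewrite [u + _]addrC subrK -/s.
  have := dot_le_sqn (G u) (x - u) (- (m / 2)); rewrite sqrrN -/s -/q.
  by move: (dot _ _) => d dot_ge lower; nra.
exists x0 => x; have [/mem_set x_box|x_nbox] := pselect (box x); first exact: x0_min.
exact: le_trans (x0_min u (mem_set box_u)) (ltW (outside x x_nbox)).
Qed.

End QuadraticModels.

Lemma is_derive_line (R : realType) (V : normedModType R) (g : V -> R) (p w : V) (t : R) :
  differentiable g (p + t *: w) ->
  is_derive t 1 (fun s : R => g (p + s *: w)) ('d g (p + t *: w) w).
Proof.
move=> dg.
have E : (fun h : R => h^-1 *: (((fun s : R => g (p + s *: w)) \o shift t) (h *: 1)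
             - g (p + t *: w)))
  = (fun h : R => h^-1 *: ((g \o shift (p + t *: w)) (h *: w) - g (p + t *: w))).
  apply/funext => h /=; congr (_ *: (g _ - _)).
  by rewrite /shift /= -[h%:A]/(h * 1) mulr1 scalerDl addrCA addrA.
split; first by rewrite /derivable E; exact: diff_derivable.
by rewrite /derive E -/(derive g (p + t *: w) w) deriveE.
Qed.

Lemma taylor1_le (R : realType) (phi D : R -> R) (K : R) :
  (forall t : R, is_derive t (1 : R) phi (D t)) ->
  (forall t, 0 < t < 1 -> D t - D 0 <= K * t) ->
  phi 1 - phi 0 <= D 0 + K / 2.
Proof.
move=> dphi D_le.
pose psi s := phi s - (s * D 0 + K / 2 * s ^+ 2).
have dpsi (t : R) : is_derive t (1 : R) psi (D t - (D 0 + K * t)).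
  apply: is_deriveB; apply: is_derive_eq.
  by rewrite !(@mulr1 _ : forall x : R, x%:A = x) /GRing.scale /=; field.
have [c /[1!in_itv] /= /andP[c0 c1] psi_mvt] := @MVT _ psi _ 0 1 ltr01 (fun t _ => dpsi t)
  (derivable_within_continuous (fun t _ => @ex_derive _ _ _ _ _ _ _ (dpsi t))).
have : psi 1 - psi 0 <= 0.
  by rewrite psi_mvt subr0 mulr1; have := D_le c; rewrite c0 c1 => /(_ isT); lra.
rewrite /psi; lra.
Qed.

Lemma taylor1_bound (R : realType) (phi D : R -> R) (K : R) :
  (forall t : R, is_derive t (1 : R) phi (D t)) ->
  (forall t, 0 < t < 1 -> `|D t - D 0| <= K * t) ->
  `|phi 1 - phi 0 - D 0| <= K / 2.
Proof.
move=> dphi D_lip.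
have up := taylor1_le dphi (fun t t01 => le_trans (ler_norm _) (D_lip t t01)).
have dNphi (t : R) : is_derive t (1 : R) (fun s => - phi s) (- D t) by apply: is_deriveN.
have D_lo t : 0 < t < 1 -> - D t - - D 0 <= K * t.
  by move=> /D_lip; rewrite ler_norml; lra.
have := taylor1_le dNphi D_lo.
by rewrite ler_norml; lra.
Qed.

Section SmoothDescent.
Variables (R : realType) (dx dy : nat) (f : 'rV[R]_dx * 'rV[R]_dy -> R).

Lemma diff_pairE x y (v1 : 'rV[R]_dx) (v2 : 'rV[R]_dy) :
  'd f (x, y) (v1, v2) = dot (gradx f x y) v1 + dot (grady f x y) v2.
Proof.
have -> : (v1, v2) = (v1, 0) + (0, v2) by rewrite /GRing.add /= /add_pair /= addr0 add0r.
rewrite linearD; congr (_ + _).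
- have -> : (v1, 0 : 'rV[R]_dy) = \sum_(i < dx) v1 ord0 i *: (delta_mx ord0 i, 0).
    rewrite {1}(row_sum_delta v1); elim/big_rec2: _ => [//|i a b _ <-].
    by rewrite /GRing.add /= /add_pair /= scaler0 addr0.
  by rewrite linear_sum /dot; apply: eq_bigr => i _; rewrite linearZ /= mxE mulrC.
- have -> : (0 : 'rV[R]_dx, v2) = \sum_(i < dy) v2 ord0 i *: (0, delta_mx ord0 i).
    rewrite {1}(row_sum_delta v2); elim/big_rec2: _ => [//|i a b _ <-].
    by rewrite /GRing.add /= /add_pair /= scaler0 addr0.
  by rewrite linear_sum /dot; apply: eq_bigr => i _; rewrite linearZ /= mxE mulrC.
Qed.

Variable L : R.
Hypotheses (L_gt0 : 0 < L) (f_smooth : L_smooth f L).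

Lemma smooth_descent x y v1 v2 :
  `|f (x + v1, y + v2) - f (x, y) - (dot (gradx f x y) v1 + dot (grady f x y) v2)|
    <= L / 2 * (sqn v1 + sqn v2).
Proof.
have [df grad_lip] := f_smooth.
set S := sqn v1 + sqn v2.
pose phi s := f ((x, y) + s *: (v1, v2)).
pose D s := dot (gradx f (x + s *: v1) (y + s *: v2)) v1 +
            dot (grady f (x + s *: v1) (y + s *: v2)) v2.
have dphi (t : R) : is_derive t (1 : R) phi (D t).
  by have := is_derive_line (df ((x, y) + t *: (v1, v2))); rewrite diff_pairE.
have D_lip t : 0 < t < 1 -> `|D t - D 0| <= L * S * t.
  move=> /andP[t0 _]; have Lt0 : 0 < L * t by rewrite mulr_gt0.
  set ax := gradx f (x + t *: v1) (y + t *: v2) - gradx f x y.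
  set ay := grady f (x + t *: v1) (y + t *: v2) - grady f x y.
  have -> : D t - D 0 = dot ax v1 + dot ay v2.
    by rewrite /D /ax /ay !scale0r !addr0 !dotBl opprD addrACA.
  rewrite mulrAC /S; apply: dot_pair_le => //.
  have dx_t : x + t *: v1 - x = t *: v1 by rewrite addrC addKr.
  have dy_t : y + t *: v2 - y = t *: v2 by rewrite addrC addKr.
  have := grad_lip (x + t *: v1) (y + t *: v2) x y.
  by rewrite dx_t dy_t !sqnZ -mulrDr mulrA -exprMn; apply.
have := taylor1_bound dphi D_lip.
by rewrite /phi /D scale1r !scale0r !addr0 mulrAC; apply.
Qed.

End SmoothDescent.

Definition prox_objective (R : realType) dx dy (f : 'rV[R]_dx * 'rV[R]_dy -> R)
  (beta : R) (u : 'rV[R]_dx) (z : 'rV[R]_dx * 'rV[R]_dy) : R :=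
  f z + beta / 2 * sqn (z.1 - u).

Section ProximalSaddle.
Variables (R : realType) (dx dy : nat) (f : 'rV[R]_dx * 'rV[R]_dy -> R).
Variables (L mu beta : R) (u : 'rV[R]_dx).
Hypotheses (L_gt0 : 0 < L) (mu_gt0 : 0 < mu) (L_lt_beta : L < beta).
Hypotheses (f_smooth : L_smooth f L) (f_PL : forall x, PL (fun y => - f (x, y)) mu).
Variable ystar : 'rV[R]_dx -> 'rV[R]_dy.
Hypothesis ystar_max : forall x y, f (x, y) <= f (x, ystar x).

Local Notation F := (prox_objective f beta u).
Local Notation primal := (fun x => F (x, ystar x)).

Lemma smooth_descent_x x v y :
  `|f (x + v, y) - f (x, y) - dot (gradx f x y) v| <= L / 2 * sqn v.
Proof.
by have := smooth_descent L_gt0 f_smooth x y v 0; rewrite addr0 dot0r addr0 sqn0 addr0.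
Qed.

Lemma smooth_descent_y x y v :
  `|f (x, y + v) - f (x, y) - dot (grady f x y) v| <= L / 2 * sqn v.
Proof.
by have := smooth_descent L_gt0 f_smooth x y 0 v; rewrite addr0 dot0r add0r sqn0 add0r.
Qed.

Lemma grady_ystar x : grady f x (ystar x) = 0.
Proof.
apply/eqP; rewrite -oppr_eq0; apply/eqP.
apply: (@min_stationary _ _ (fun y => - f (x, y)) _ _ (L / 2)); first by rewrite divr_gt0.
  by move=> v; rewrite lerN2.
move=> v; have := smooth_descent_y x (ystar x) v; rewrite dotNl ler_norml; lra.
Qed.

Lemma gradNy x y : differentiable (fun y => - f (x, y)) y ->
  grad (fun y => - f (x, y)) y = - grady f x y.
Proof.
move=> dNf; have [df _] := f_smooth.
apply/rowP => i; rewrite !mxE -deriveE //.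
have slice e : (fun h : R => h^-1 *: (((fun y => f (x, y)) \o shift y) (h *: e) - f (x, y))) =
    (fun h : R => h^-1 *: ((f \o shift (x, y)) (h *: (0 : 'rV[R]_dx, e)) - f (x, y))).
  apply/funext => h /=; congr (_ *: (f _ - _)).
  by rewrite /shift /=; congr pair; rewrite /GRing.scale /= scaler0 add0r.
have der : derivable (fun y => f (x, y)) y (delta_mx ord0 i).
  by rewrite /derivable slice; exact: diff_derivable.
rewrite (_ : (fun y => - f (x, y)) = - (fun y => f (x, y))) // deriveN //.
by rewrite /derive slice -/(derive f (x, y) (0, delta_mx ord0 i)) deriveE.
Qed.

Lemma PL_gap x y : 2 * mu * (f (x, ystar x) - f (x, y)) <= sqn (grady f x y).
Proof.
have [dNf PL_ineq] := f_PL x.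
have := PL_ineq y; rewrite gradNy // sqnN.
have inf_le : inf (range (fun y => - f (x, y))) <= - f (x, ystar x).
  apply: ge_inf; last by exists (ystar x).
  by exists (- f (x, ystar x)) => _ [z _ <-]; rewrite lerN2.
apply: le_trans; rewrite ler_pM2l ?mulr_gt0 //; lra.
Qed.

Lemma ystar_value_le x x0 :
  f (x, ystar x) <= f (x, ystar x0) + L ^+ 2 / (2 * mu) * sqn (x - x0).
Proof.
have mu2_gt0 : 0 < 2 * mu by rewrite mulr_gt0.
have grad_le : sqn (grady f x (ystar x0)) <= L ^+ 2 * sqn (x - x0).
  have := f_smooth.2 x (ystar x0) x0 (ystar x0).
  rewrite grady_ystar (subr0 (grady f x (ystar x0))) (subrr (ystar x0)) sqn0.
  rewrite (addr0 (sqn (x - x0))) => /(le_trans _); apply.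
  by rewrite lerDr sqn_ge0.
have : 2 * mu * (f (x, ystar x) - f (x, ystar x0))
         <= 2 * mu * (L ^+ 2 / (2 * mu) * sqn (x - x0)).
  rewrite mulrA mulrCA mulfV ?mulr1 ?lt0r_neq0 //.
  exact: le_trans (PL_gap x (ystar x0)) grad_le.
by rewrite ler_pM2l // lerBlDl addrC.
Qed.

Lemma prox_increment x y v :
  `|F (x + v, y) - F (x, y) - dot (gradx f x y + beta *: (x - u)) v - beta / 2 * sqn v|
    <= L / 2 * sqn v.
Proof.
have shift_sqn : sqn (x + v - u) = sqn (x - u) + 2 * dot (x - u) v + sqn v.
  by rewrite addrAC -[v]scale1r sqnDZ scale1r expr1n mul1r mulr1.
have := smooth_descent_x x v y.
rewrite /prox_objective /= shift_sqn (dotDl (gradx f x y)) dotZl.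
move: (f (x + v, y)) (f (x, y)) (dot _ v) (dot (x - u) v) (sqn v) (sqn (x - u)).
by move=> a b c d e g; rewrite !ler_norml; lra.
Qed.

Lemma prox_strongly_convex y :
  strongly_convex_with (fun x => F (x, y)) (fun x => gradx f x y + beta *: (x - u))
    (beta - L).
Proof.
move=> x v; have := prox_increment x y v.
move: (F _) (F _) (dot _ v) (sqn v) => a b c e; rewrite ler_norml; lra.
Qed.

Lemma primal_strongly_convex :
  strongly_convex_with primal (fun x => gradx f x (ystar x) + beta *: (x - u)) (beta - L).
Proof.
move=> x v; apply: le_trans (prox_strongly_convex (ystar x) x v) _.
by rewrite /prox_objective /= lerD2r.
Qed.

Lemma primal_upper x v :
  primal (x + v) <= primal x + dot (gradx f x (ystar x) + beta *: (x - u)) v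
                    + (L / 2 + beta / 2 + L ^+ 2 / (2 * mu)) * sqn v.
Proof.
have := ystar_value_le (x + v) x; rewrite [x + v - x]addrC addKr.
have := prox_increment x (ystar x) v; rewrite /prox_objective /=.
move: (f _) (f _) (f _) (sqn _) (sqn _) (sqn v) (dot _ v) => a b c d e s g.
by rewrite ler_norml; lra.
Qed.

Lemma continuous_primal : continuous primal.
Proof.
have [df _] := f_smooth.
have sqn_cont (c : R) (a : 'rV[R]_dx) : continuous (fun x : 'rV[R]_dx => c * sqn (x - a)).
  have -> : (fun x => c * sqn (x - a)) = (fun _ => c) \* (fun x => sqn (x - a)) by [].
  by move=> x; apply: continuousM; [exact: cst_continuous | exact: continuous_sqnB].
have slice_cont y0 : continuous (fun x => F (x, y0)).
  have -> : (fun x => F (x, y0)) =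
      (fun x => f (x, y0)) + (fun x => beta / 2 * sqn (x - u)) by [].
  move=> x; apply: continuousD; last exact: sqn_cont.
  apply: differentiable_continuous; apply: differentiable_comp (df _).
  by apply: differentiable_pair; [exact: ex_diff | exact: differentiable_cst].
move=> x0; apply: (@squeeze_cvgr _ (nbhs x0) _ _ (fun x => F (x, ystar x0))
  (fun x => F (x, ystar x0) + L ^+ 2 / (2 * mu) * sqn (x - x0))).
- apply: nearW => x /=; rewrite /prox_objective /=.
  have := ystar_value_le x x0; have := ystar_max x (ystar x0).
  by move: (f _) (f _) (_ * _) => a b c; lra.
- exact: slice_cont.
- have -> : F (x0, ystar x0) = F (x0, ystar x0) + L ^+ 2 / (2 * mu) * sqn (x0 - x0).
    by rewrite subrr sqn0 mulr0 addr0.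
  exact: continuousD (slice_cont (ystar x0) x0) (sqn_cont _ x0 x0).
Qed.

Lemma primal_min_saddle x0 : is_min primal x0 -> saddle_point F (x0, ystar x0).
Proof.
move=> x0_min.
have K_gt0 : 0 < L / 2 + beta / 2 + L ^+ 2 / (2 * mu).
  have : 0 <= L ^+ 2 / (2 * mu) by rewrite divr_ge0 ?sqr_ge0 // ltW // mulr_gt0.
  by move: (L ^+ 2 / _) L_gt0 L_lt_beta => C; lra.
have G0 : gradx f x0 (ystar x0) + beta *: (x0 - u) = 0.
  exact: min_stationary K_gt0 x0_min (primal_upper x0).
move=> x y; split; rewrite /prox_objective /=; first by rewrite lerD2r.
have := prox_strongly_convex (ystar x0) x0 (x - x0).
rewrite /= G0 dot0l addr0 [x0 + _]addrC subrK /prox_objective /=.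
have : 0 <= (beta - L) / 2 * sqn (x - x0).
  by rewrite mulr_ge0 ?sqn_ge0 // divr_ge0 // subr_ge0 ltW.
by move: (f _) (f _) (sqn _) (_ * _) => a b c d; lra.
Qed.

Lemma saddle_primal_min p :
  (forall x y, (forall y', f (x, y') <= f (x, y)) -> y = ystar x) ->
  saddle_point F p -> p.2 = ystar p.1 /\ is_min primal p.1.
Proof.
case: p => p1 p2 ystar_unique p_saddle /=.
have p2E : p2 = ystar p1.
  by apply: ystar_unique => y; have [+ _] := p_saddle p1 y; rewrite /prox_objective lerD2r.
split=> // x; have [_] := p_saddle x p2; rewrite -p2E => /le_trans; apply.
by rewrite /prox_objective lerD2r.
Qed.

Lemma prox_saddle_unique :
  (forall x y, (forall y', f (x, y') <= f (x, y)) -> y = ystar x) ->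
  exists! p, saddle_point F p.
Proof.
move=> ystar_unique; have m_gt0 : 0 < beta - L by rewrite subr_gt0.
have [x0 x0_min] := strongly_convex_exists_min m_gt0 continuous_primal primal_strongly_convex.
exists (x0, ystar x0); split; first exact: primal_min_saddle.
move=> [p1 p2] /(saddle_primal_min ystar_unique) /= [-> p1_min].
by rewrite (strongly_convex_min_unique m_gt0 primal_strongly_convex p1_min x0_min).
Qed.

End ProximalSaddle.

Theorem mainTheorem15 (R : realType) (dx dy : nat)
  (f : 'rV[R]_dx * 'rV[R]_dy -> R) (L mu_y beta : R) (u : 'rV[R]_dx) :
  0 < L -> 0 < mu_y ->
  L_smooth f L ->
  (forall x, PL (fun y => - f (x, y)) mu_y) ->
  (forall x, exists! ys, forall y, f (x, y) <= f (x, ys)) ->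
  (exists c : R, forall x, c <= maxval f x) ->
  L < beta ->
  exists! p, saddle_point (fun z => f z + beta / 2 * sqn (z.1 - u)) p.
Proof.
move=> L_gt0 mu_gt0 f_smooth f_PL f_argmax _ L_lt_beta.
have argmax_ex x : exists ys, forall y, f (x, y) <= f (x, ys).
  by have [ys [ys_max _]] := f_argmax x; exists ys.
have [ystar ystar_max] := choice argmax_ex.
have ystar_unique x y : (forall y', f (x, y') <= f (x, y)) -> y = ystar x.
  by have [ys [_ ys_unique]] := f_argmax x; move=> /ys_unique <-; apply: ys_unique.
exact: (prox_saddle_unique u L_gt0 mu_gt0 L_lt_beta f_smooth f_PL ystar_max ystar_unique).
Qed.
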